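(* Let $\widehat{G}$ be a signed bigraph whose underlying bigraph is non-separable, with bipartition $(X,Y)$ and no isolated vertices, and let $x_1,\dots,x_\alpha,y_1,\dots,y_\beta$ be a canonical ordering of $\widehat{G}$. Suppose there are distinct $x_i,x_j,x_k\in X$ and distinct $y_\ell,y_q,y_r\in Y$ with $x_i,x_j\in N(y_1)$ such that, in the subgraph induced by these six vertices, the edges are exactly $x_iy_\ell,x_iy_q,x_iy_r,x_jy_\ell,x_jy_q,x_jy_r,x_ky_r$ (so $x_ky_\ell,x_ky_q$ are non-edges), where $x_iy_\ell$, $x_iy_q$ and $x_jy_r$ are negative (the others of any sign). If no edge of $\widehat{G}$ is signed simplicial, then $\widehat{G}$ contains a graph in $F_3\cup F_4\cup F_5\cup F_6$ as an induced subgraph, where: $F_3$: complete bigraph with parts $\{a_1,a_2\}$, $\{b_1,\dots,b_4\}$, $a_1b_1,a_1b_2,a_2b_3,a_2b_4$ negative, other four edges free; $F_4$: complete bigraph with parts $\{a_1,a_2,a_3\}$, $\{b_1,b_2,b_3\}$, $a_1b_1,a_2b_2,a_3b_3$ negative, other six edges free; $F_5$: bigraph with parts $\{a_1,a_2,a_3\}$, $\{b_1,b_2,b_3\}$ having all nine possible edges except $a_1b_3$, with $a_2b_1,a_3b_2$ negative and the other six edges free; $F_6$: bigraph with parts $\{a_1,\dots,a_4\}$, $\{b_1,\dots,b_4\}$ in which $a_1,a_2$ are adjacent exactly to $b_1,b_2$ and $a_3,a_4$ to all of $b_1,\dots,b_4$, with $a_1b_1,a_2b_1,a_3b_2,a_4b_3,a_4b_4$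 negative and the other seven edges free.
   Context: A signed graph is a finite simple graph each of whose edges is assigned a sign, positive or negative. A signed bigraph is a signed graph whose underlying graph is bipartite. A bigraph is non-separable if it contains no induced $2K_2$. An induced subgraph is obtained by deleting vertices only; $\widehat G$ contains $H$ as an induced subgraph if some induced subgraph is isomorphic to $H$ via a sign-preserving isomorphism. In a bigraph with bipartition $(X,Y)$, a subgraph $H$ is a biclique if every vertex of $V(H)\cap X$ is adjacent to every vertex of $V(H)\cap Y$. For an edge $uv$, $N(uv)=(N(u)\cup N(v))\setminus\{u,v\}$; $uv$ is signed simplicial if $N(uv)$ induces a biclique all of whose edges are positive. A canonical ordering of a non-separable bigraph with $X=\{x_1,\dots,x_\alpha\}$, $Y=\{y_1,\dots,y_\beta\}$ is an ordering with $N(x_1)\supseteq\cdots\supseteq N(x_\alpha)$ and $N(y_1)\subseteq\cdots\subseteq N(y_\beta)$. A family described by a graph with some edges declared negative and the rest declared free is the set of all signed graphs obtained by giving each free edge an arbitrary sign. *)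

From mathcomp Require Import all_boot.
Set Implicit Arguments. Unset Strict Implicit. Unset Printing Implicit Defensive.

(* A signed bigraph with bipartition (X,Y): an adjacency relation
   adj : X -> Y -> bool (edges go between X and Y only, so the graph is
   simple and bipartite) and a sign neg : X -> Y -> bool
   (neg x y = true means the edge xy is negative; only meaningful on edges). *)

(* non-separable: no induced 2K2 *)
Definition no_induced_2K2 (X Y : finType) (adj : X -> Y -> bool) : Prop :=
  ~ (exists x x' y y', [/\ adj x y, adj x' y', ~~ adj x y' & ~~ adj x' y]).

Definition no_isolated (X Y : finType) (adj : X -> Y -> bool) : Prop :=
  (forall x, exists y, adj x y) /\ (forall y, exists x, adj x y).

Definition nbY (X Y : finType) (adj : X -> Y -> bool) (x : X) : {set Y} :=
  [set y | adj x y].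
Definition nbX (X Y : finType) (adj : X -> Y -> bool) (y : Y) : {set X} :=
  [set x | adj x y].

(* canonical ordering x_1..x_a, y_1..y_b (0-based indices) *)
Definition canonical_ordering (X Y : finType) (adj : X -> Y -> bool)
  (a b : nat) (ox : 'I_a -> X) (oy : 'I_b -> Y) : Prop :=
  [/\ bijective ox, bijective oy,
      (forall i j : 'I_a, i <= j -> nbY adj (ox j) \subset nbY adj (ox i))
    & (forall i j : 'I_b, i <= j -> nbX adj (oy i) \subset nbX adj (oy j))].

(* For the edge xy: N(xy) = (N(x) u N(y)) \ {x,y}; its X-part is N(y)\{x}
   and its Y-part is N(x)\{y}.  xy is signed simplicial if N(xy) induces
   a biclique all of whose edges are positive. *)
Definition signed_simplicial (X Y : finType) (adj neg : X -> Y -> bool)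
  (x : X) (y : Y) : bool :=
  adj x y &&
  [forall x' in nbX adj y :\ x, forall y' in nbY adj x :\ y,
      adj x' y' && ~~ neg x' y'].

(* A family of signed bigraphs with parts {a_1..a_m}, {b_1..b_n}:
   E = edge set, Neg = edges declared negative (the other edges are free).
   A member of the family is given by a sign function sigma
   (sigma i j = true: edge a_i b_j negative) agreeing with Neg. *)
Definition in_family (m n : nat) (E Neg sigma : 'I_m -> 'I_n -> bool) : Prop :=
  forall i j, E i j -> Neg i j -> sigma i j.

(* The signed graph G contains the signed bigraph (E,sigma) as an induced
   subgraph (sign-preserving isomorphism); the isomorphism may send the
   part {a_i} to X or to Y. *)
Definition contains_induced (X Y : finType) (adj neg : X -> Y -> bool)
  (m n : nat) (E sigma : 'I_m -> 'I_n -> bool) : Prop :=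
  (exists (fa : 'I_m -> X) (fb : 'I_n -> Y),
     [/\ injective fa, injective fb &
         forall i j, adj (fa i) (fb j) = E i j /\
                     (E i j -> neg (fa i) (fb j) = sigma i j)])
  \/
  (exists (fa : 'I_m -> Y) (fb : 'I_n -> X),
     [/\ injective fa, injective fb &
         forall i j, adj (fb j) (fa i) = E i j /\
                     (E i j -> neg (fb j) (fa i) = sigma i j)]).

Definition contains_family (X Y : finType) (adj neg : X -> Y -> bool)
  (m n : nat) (E Neg : 'I_m -> 'I_n -> bool) : Prop :=
  exists sigma, in_family E Neg sigma /\ contains_induced adj neg E sigma.

(* indices are 0-based: a_1 is index 0, etc. *)
Definition F3E (i : 'I_2) (j : 'I_4) : bool := true.
Definition F3Neg (i : 'I_2) (j : 'I_4) : bool :=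
  ((i == 0 :> nat) && (j < 2)) || ((i == 1 :> nat) && (2 <= j)).

Definition F4E (i : 'I_3) (j : 'I_3) : bool := true.
Definition F4Neg (i : 'I_3) (j : 'I_3) : bool := (i == j :> nat).

Definition F5E (i : 'I_3) (j : 'I_3) : bool := ~~ ((i == 0 :> nat) && (j == 2 :> nat)).
Definition F5Neg (i : 'I_3) (j : 'I_3) : bool :=
  ((i == 1 :> nat) && (j == 0 :> nat)) || ((i == 2 :> nat) && (j == 1 :> nat)).

Definition F6E (i : 'I_4) (j : 'I_4) : bool := (2 <= i) || (j < 2).
Definition F6Neg (i : 'I_4) (j : 'I_4) : bool :=
  [|| (i == 0 :> nat) && (j == 0 :> nat), (i == 1 :> nat) && (j == 0 :> nat),
      (i == 2 :> nat) && (j == 1 :> nat) | (i == 3 :> nat) && (2 <= j)].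

From mathcomp Require Import all_boot.

Set Implicit Arguments.
Unset Strict Implicit.
Unset Printing Implicit Defensive.

(* Since x_i and x_j lie in N(y_1), the smallest neighbourhood of a vertex of Y,
   they are adjacent to all of Y.  In a 2K2-free bigraph the neighbourhoods of X are
   linearly ordered, so N(y_r) contains a vertex t of least neighbourhood, and
   t misses y_l and y_q as x_k does.  The edge t y_r is not signed simplicial,
   which yields a negative edge x' y' with x' in N(y_r) and y' in N(t); unless
   one of F3 (x' = x_j), F5 (x' = x_i, or N(x') strictly larger than N(t))
   appears, x' is a new vertex with the least neighbourhood.  Applying this
   twice gives negative edges x_1 y_1 and x_2 y_2 inside the common
   neighbourhood N(t) = N(x_1) = N(x_2); together with x_j y_r they form an F4
   when y_1 <> y_2 and, with x_i y_l, x_i y_q, an F6 when y_1 = y_2. *)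

Definition contains_F3456 (X Y : finType) (adj neg : X -> Y -> bool) : Prop :=
  [\/ contains_family adj neg F3E F3Neg,
      contains_family adj neg F4E F4Neg,
      contains_family adj neg F5E F5Neg |
      contains_family adj neg F6E F6Neg].

Section Embedding.

Variables (X Y : finType) (adj neg : X -> Y -> bool) (m n : nat).
Variables (E Neg : 'I_m -> 'I_n -> bool).

Lemma contains_family_nth (sa : seq X) (sb : seq Y) x0 y0 :
  size sa = m -> size sb = n -> uniq sa -> uniq sb ->
  (forall (i : 'I_m) (j : 'I_n), adj (nth x0 sa i) (nth y0 sb j) = E i j) ->
  (forall (i : 'I_m) (j : 'I_n), E i j -> Neg i j -> neg (nth x0 sa i) (nth y0 sb j)) ->
  contains_family adj neg E Neg.
Proof.
move=> size_a size_b uniq_a uniq_b adjE negE.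
exists (fun i j => neg (nth x0 sa i) (nth y0 sb j)); split=> //.
left; exists (nth x0 sa \o val), (nth y0 sb \o val); split=> //.
- by move=> i j /eqP; rewrite nth_uniq ?size_a ?ltn_ord // => /eqP/val_inj.
- by move=> i j /eqP; rewrite nth_uniq ?size_b ?ltn_ord // => /eqP/val_inj.
- by move=> i j /=; rewrite adjE.
Qed.

Lemma contains_family_nth_transposed (sa : seq Y) (sb : seq X) y0 x0 :
  size sa = m -> size sb = n -> uniq sa -> uniq sb ->
  (forall (i : 'I_m) (j : 'I_n), adj (nth x0 sb j) (nth y0 sa i) = E i j) ->
  (forall (i : 'I_m) (j : 'I_n), E i j -> Neg i j -> neg (nth x0 sb j) (nth y0 sa i)) ->
  contains_family adj neg E Neg.
Proof.
move=> size_a size_b uniq_a uniq_b adjE negE.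
exists (fun i j => neg (nth x0 sb j) (nth y0 sa i)); split=> //.
right; exists (nth y0 sa \o val), (nth x0 sb \o val); split=> //.
- by move=> i j /eqP; rewrite nth_uniq ?size_a ?ltn_ord // => /eqP/val_inj.
- by move=> i j /eqP; rewrite nth_uniq ?size_b ?ltn_ord // => /eqP/val_inj.
- by move=> i j /=; rewrite adjE.
Qed.

End Embedding.

Ltac case_small_ordinals :=
  move=> [[|[|[|[|?]]]] ?] [[|[|[|[|?]]]] ?] //=.

Ltac solve_uniq :=
  rewrite /= ?inE ?negb_or ?andbT; repeat (apply/andP; split);
  try by [|rewrite eq_sym].

Section Families.

Variables (X Y : finType) (adj neg : X -> Y -> bool).

Lemma contains_F3 x1 x2 y1 y2 y3 y4 :
  x1 != x2 -> uniq [:: y1; y2; y3; y4] ->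
  (forall y, adj x1 y) -> (forall y, adj x2 y) ->
  neg x1 y1 -> neg x1 y2 -> neg x2 y3 -> neg x2 y4 -> contains_F3456 adj neg.
Proof.
move=> x12 uniq_y x1_all x2_all n11 n12 n23 n24; constructor 1.
apply: (@contains_family_nth _ _ _ _ 2 4 _ _ [:: x1; x2] [:: y1; y2; y3; y4] x1 y1)
  => //; first by rewrite /= inE x12.
all: by case_small_ordinals; rewrite ?x1_all ?x2_all.
Qed.

Lemma contains_F4 x1 x2 x3 y1 y2 y3 :
  uniq [:: x1; x2; x3] -> uniq [:: y1; y2; y3] ->
  (forall x y, x \in [:: x1; x2; x3] -> y \in [:: y1; y2; y3] -> adj x y) ->
  neg x1 y1 -> neg x2 y2 -> neg x3 y3 -> contains_F3456 adj neg.
Proof.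
move=> uniq_x uniq_y complete n11 n22 n33; constructor 2.
apply: (@contains_family_nth _ _ _ _ 3 3 _ _ [:: x1; x2; x3] [:: y1; y2; y3] x1 y1)
  => //; by case_small_ordinals; rewrite ?complete ?inE ?eqxx ?orbT.
Qed.

Lemma contains_F5 x1 x2 x3 y1 y2 y3 :
  uniq [:: x1; x2; x3] -> uniq [:: y1; y2; y3] -> (forall y, adj x3 y) ->
  adj x1 y1 -> adj x1 y2 -> ~~ adj x1 y3 -> adj x2 y1 -> adj x2 y2 -> adj x2 y3 ->
  neg x2 y1 -> neg x3 y2 -> contains_F3456 adj neg.
Proof.
move=> uniq_x uniq_y x3_all a11 a12 /negbTE a13 a21 a22 a23 n21 n32; constructor 3.
apply: (@contains_family_nth _ _ _ _ 3 3 _ _ [:: x1; x2; x3] [:: y1; y2; y3] x1 y1)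
  => //; by case_small_ordinals; rewrite ?x3_all.
Qed.

Lemma contains_F5_transposed x1 x2 x3 y1 y2 y3 :
  uniq [:: x1; x2; x3] -> uniq [:: y1; y2; y3] ->
  (forall y, adj x1 y) -> (forall y, adj x2 y) ->
  adj x3 y2 -> adj x3 y3 -> ~~ adj x3 y1 ->
  neg x1 y2 -> neg x2 y3 -> contains_F3456 adj neg.
Proof.
move=> uniq_x uniq_y x1_all x2_all a32 a33 /negbTE a31 n12 n23; constructor 3.
apply: (@contains_family_nth_transposed _ _ _ _ 3 3 _ _
  [:: y1; y2; y3] [:: x1; x2; x3] y1 x1) => //;
  by case_small_ordinals; rewrite ?x1_all ?x2_all.
Qed.

Lemma contains_F6 x1 x2 x3 x4 y1 y2 y3 y4 :
  uniq [:: x1; x2; x3; x4] -> uniq [:: y1; y2; y3; y4] ->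
  (forall y, adj x3 y) -> (forall y, adj x4 y) ->
  adj x1 y1 -> adj x1 y2 -> ~~ adj x1 y3 -> ~~ adj x1 y4 ->
  adj x2 y1 -> adj x2 y2 -> ~~ adj x2 y3 -> ~~ adj x2 y4 ->
  neg x1 y1 -> neg x2 y1 -> neg x3 y2 -> neg x4 y3 -> neg x4 y4 ->
  contains_F3456 adj neg.
Proof.
move=> uniq_x uniq_y x3_all x4_all a11 a12 /negbTE a13 /negbTE a14
  a21 a22 /negbTE a23 /negbTE a24 n11 n21 n32 n43 n44; constructor 4.
apply: (@contains_family_nth _ _ _ _ 4 4 _ _
  [:: x1; x2; x3; x4] [:: y1; y2; y3; y4] x1 y1) => //;
  by case_small_ordinals; rewrite ?x3_all ?x4_all.
Qed.

End Families.

Section Neighbourhoods.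

Variables (X Y : finType) (adj : X -> Y -> bool).

Definition least_nb (y : Y) (t : X) : Prop :=
  adj t y /\ forall x, adj x y -> nbY adj t \subset nbY adj x.

Lemma least_nb_adj y t x z : least_nb y t -> adj x y -> adj t z -> adj x z.
Proof.
by case=> _ least_t x_y t_z; have /subsetP/(_ z) := least_t x x_y; rewrite !inE; apply.
Qed.

Lemma least_nb_nonadj y t x z : least_nb y x -> adj t y -> ~~ adj t z -> ~~ adj x z.
Proof. by move=> least_x t_y; apply: contraNN; apply: least_nb_adj least_x t_y. Qed.

Lemma nbY_nested : no_induced_2K2 adj ->
  forall x x', nbY adj x \subset nbY adj x' \/ nbY adj x' \subset nbY adj x.
Proof.
move=> no2K2 x x'; case: (boolP (nbY adj x \subset nbY adj x')) => [|/subsetPn]; first by left.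
case=> y; rewrite !inE => x_y x'_not_y; right; apply/subsetP => z; rewrite !inE => x'_z.
apply/negPn/negP => x_not_z; apply: no2K2; by exists x, x', y, z.
Qed.

Lemma exists_least_nb y x0 : no_induced_2K2 adj -> adj x0 y -> exists t, least_nb y t.
Proof.
move=> no2K2 x0_y.
case: (@arg_minnP X x0 (adj^~ y) (fun t => #|nbY adj t|) x0_y) => t t_y t_min.
exists t; split=> // x x_y; case: (nbY_nested no2K2 t x) => // sub_x_t.
suff /eqP -> : nbY adj x == nbY adj t by [].
by rewrite -(geq_leqif (subset_leqif_cards sub_x_t)) t_min.
Qed.

Lemma canonical_first_univ a b (ox : 'I_a -> X) (oy : 'I_b -> Y) (i0 : 'I_b) x :
  canonical_ordering adj ox oy -> val i0 = 0 -> adj x (oy i0) -> forall y, adj x y.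
Proof.
case=> _ [inv_oy _ inv_oyK] _ nbX_mono i0_0 x_y0 y.
have i0_le : i0 <= inv_oy y by move: i0_0 => /= ->.
by have /subsetP/(_ x) := nbX_mono _ _ i0_le; rewrite inv_oyK !inE; apply.
Qed.

End Neighbourhoods.

Section NegativeEdges.

Variables (X Y : finType) (adj neg : X -> Y -> bool) (xi xj : X) (yl yq yr : Y).
Hypotheses (xi_neq_xj : xi != xj) (uniq_y : uniq [:: yl; yq; yr]).
Hypotheses (xi_univ : forall y, adj xi y) (xj_univ : forall y, adj xj y).
Hypotheses (neg_il : neg xi yl) (neg_iq : neg xi yq) (neg_jr : neg xj yr).
Hypothesis no_simplicial : forall x y, ~~ signed_simplicial adj neg x y.

Lemma least_nb_negative_edge t :
  least_nb adj yr t -> ~~ adj t yl -> ~~ adj t yq ->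
  contains_F3456 adj neg \/
  exists x' y', [/\ x' != t, least_nb adj yr x', adj t y', y' != yr & neg x' y'].
Proof.
move=> least_t t_l t_q; have [t_r t_min] := least_t.
have := no_simplicial t yr; rewrite /signed_simplicial t_r /=.
case/forallPn=> x'; rewrite negb_imply !inE => /andP[/andP[x'_t x'_r]].
case/forallPn=> y'; rewrite negb_imply !inE => /andP[/andP[y'_r t_y']].
rewrite (least_nb_adj least_t x'_r t_y') /= negbK => neg_x'y'.
have t_i : t != xi by apply: contraNneq t_l => ->.
have t_j : t != xj by apply: contraNneq t_l => ->.
have y'_l : y' != yl by apply: contraNneq t_l => <-.
have y'_q : y' != yq by apply: contraNneq t_q => <-.
move: uniq_y; rewrite /= !inE negb_or andbT => /andP[/andP[l_q l_r] q_r].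
case: (eqVneq x' xi) neg_x'y' => [-> | x'_i] neg_x'y'.
  by left; apply: (@contains_F5_transposed _ _ adj neg xi xj t yl y' yr) => //; solve_uniq.
case: (eqVneq x' xj) neg_x'y' => [-> | x'_j] neg_x'y'.
  by left; apply: (@contains_F3 _ _ adj neg xi xj yl yq yr y') => //; solve_uniq.
case: (boolP [exists y, adj x' y && ~~ adj t y]) => [/existsP[y /andP[x'_y t_y]] | ].
  have y'_y : y' != y by apply: contraNneq t_y => <-.
  have r_y : yr != y by apply: contraNneq t_y => <-.
  left; apply: (@contains_F5 _ _ adj neg t x' xj y' yr y) => //; try by solve_uniq.
  exact: least_nb_adj least_t x'_r t_y'.
move/existsPn=> x'_sub_t; right; exists x', y'; split=> //; split=> // x x_r.
apply: subset_trans (t_min x x_r); apply/subsetP=> y; rewrite !inE => x'_y.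
by have := x'_sub_t y; rewrite x'_y negbK.
Qed.

Lemma least_nb_F3456 t :
  least_nb adj yr t -> ~~ adj t yl -> ~~ adj t yq -> contains_F3456 adj neg.
Proof.
move=> least_t t_l t_q; have [t_r _] := least_t.
case: (least_nb_negative_edge least_t t_l t_q) => // -[x1 [y1 [_ least_x1 t_y1 y1_r n11]]].
have [x1_r _] := least_x1.
have x1_l := least_nb_nonadj least_x1 t_r t_l.
have x1_q := least_nb_nonadj least_x1 t_r t_q.
case: (least_nb_negative_edge least_x1 x1_l x1_q) => // -[x2 [y2 [x2_1 least_x2 x1_y2 y2_r n22]]].
have [x2_r _] := least_x2.
have x2_l := least_nb_nonadj least_x2 x1_r x1_l.
have x2_q := least_nb_nonadj least_x2 x1_r x1_q.
have x1_y1 := least_nb_adj least_t x1_r t_y1.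
have x2_y1 := least_nb_adj least_t x2_r t_y1.
have x2_y2 := least_nb_adj least_x1 x2_r x1_y2.
have x1_i : x1 != xi by apply: contraNneq x1_l => ->.
have x1_j : x1 != xj by apply: contraNneq x1_l => ->.
have x2_i : x2 != xi by apply: contraNneq x2_l => ->.
have x2_j : x2 != xj by apply: contraNneq x2_l => ->.
have y1_l : y1 != yl by apply: contraNneq t_l => <-.
have y1_q : y1 != yq by apply: contraNneq t_q => <-.
move: uniq_y; rewrite /= !inE negb_or andbT => /andP[/andP[l_q l_r] q_r].
case: (eqVneq y1 y2) n22 => [<- | y1_2] n22.
  by apply: (@contains_F6 _ _ adj neg x1 x2 xj xi y1 yr yl yq) => //; solve_uniq.
apply: (@contains_F4 _ _ adj neg x1 x2 xj y1 y2 yr) => //; try by solve_uniq.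
by move=> x y; rewrite !inE => /or3P[]/eqP-> /or3P[]/eqP->.
Qed.

End NegativeEdges.

Theorem lemma3p4 (X Y : finType) (adj neg : X -> Y -> bool)
  (a b : nat) (ox : 'I_a -> X) (oy : 'I_b -> Y)
  (xi xj xk : X) (yl yq yr : Y) :
  no_induced_2K2 adj -> no_isolated adj -> canonical_ordering adj ox oy ->
  uniq [:: xi; xj; xk] -> uniq [:: yl; yq; yr] ->
  (forall i0 : 'I_b, val i0 = 0 -> adj xi (oy i0) && adj xj (oy i0)) ->
  adj xi yl -> adj xi yq -> adj xi yr ->
  adj xj yl -> adj xj yq -> adj xj yr ->
  adj xk yr -> ~~ adj xk yl -> ~~ adj xk yq ->
  neg xi yl -> neg xi yq -> neg xj yr ->
  (forall (x : X) (y : Y), ~~ signed_simplicial adj neg x y) ->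
  [\/ contains_family adj neg F3E F3Neg,
      contains_family adj neg F4E F4Neg,
      contains_family adj neg F5E F5Neg |
      contains_family adj neg F6E F6Neg].
Proof.
move=> no2K2 _ canon uniq_x uniq_y y1_ij _ _ _ _ _ _ xk_r xk_l xk_q n_il n_iq n_jr no_simplicial.
have b_gt0 : 0 < b.
  by case: canon => _ [inv_oy _ _] _ _; case: (inv_oy yl) => k /(leq_ltn_trans (leq0n k)).
have i0_0 : val (Ordinal b_gt0) = 0 by [].
have /andP[xi_y1 xj_y1] := y1_ij _ i0_0.
have xi_univ := canonical_first_univ canon i0_0 xi_y1.
have xj_univ := canonical_first_univ canon i0_0 xj_y1.
have xi_j : xi != xj by move: uniq_x; rewrite /= !inE negb_or => /andP[/andP[]].
have [t least_t] := exists_least_nb no2K2 xk_r.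
apply: (least_nb_F3456 xi_j uniq_y xi_univ xj_univ n_il n_iq n_jr no_simplicial least_t).
- exact: least_nb_nonadj least_t xk_r xk_l.
- exact: least_nb_nonadj least_t xk_r xk_q.
Qed.
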